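(* Let $\Omega\subset\mathbb{C}$ be a simply connected domain, let $(h,\mathcal{M},\mathcal{N})$ be a Weierstrass data of the second kind on $\Omega$, and let $\tau\in\mathbb{R}$. Set $h_\tau:=e^{-i\tau}h$ and $\mathcal{N}_\tau:=\mathcal{N}$. Then there exists a $\mathcal{C}^2$ function $\mathcal{M}_\tau:\Omega\to\mathbb{R}$ satisfying $$(\mathcal{M}_\tau)_z=e^{i\tau}\mathcal{M}_z-\frac{e^{i\tau}-e^{-i\tau}}{2}\,h\,\mathcal{N}_z,$$ and for any such $\mathcal{M}_\tau$ the triple $(h_\tau,\mathcal{M}_\tau,\mathcal{N}_\tau)$ is a Weierstrass data of the second kind on $\Omega$.
   Context: $\Omega\subset\mathbb{R}^2\equiv\mathbb{C}$ has complex coordinate $z=u+iv$, and $\partial_z=\frac12(\partial_u-i\partial_v)$, $\partial_{\overline z}=\frac12(\partial_u+i\partial_v)$; subscripts denote partial derivatives. A Weierstrass data of the second kind on $\Omega$ is a triple $(h,\mathcal{M},\mathcal{N})$ where $h:\Omega\to\mathbb{C}\setminus\{0\}$ and $\mathcal{M},\mathcal{N}:\Omega\to\mathbb{R}$ are $\mathcal{C}^2$, satisfying $h_{\overline z}=0$, $\mathcal{M}_{z\overline z}=(\mathrm{Re}\,h)\,\mathcal{N}_{z\overline z}$, and $\mathcal{M}_z-(\mathrm{Re}\,h)\,\mathcal{N}_z\neq0$ at every point of $\Omega$. *)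

From Stdlib Require Import Reals.
From Coquelicot Require Import Coquelicot.
Open Scope R_scope.

(* We identify C with R^2 via z = u + i v.  A subset of the plane is a
   predicate Om : R -> R -> Prop on the coordinates (u, v). *)

Definition unit_I (t : R) : Prop := 0 <= t <= 1.
Definition unit_sq (p : R * R) : Prop := unit_I (fst p) /\ unit_I (snd p).
Definition in_set (Om : R -> R -> Prop) (p : R * R) : Prop := Om (fst p) (snd p).

Definition cont_path (g : R -> R * R) : Prop :=
  forall t, unit_I t -> filterlim g (within unit_I (locally t)) (locally (g t)).

Definition cont_sq (H : R * R -> R * R) : Prop :=
  forall p, unit_sq p -> filterlim H (within unit_sq (locally p)) (locally (H p)).

Definition path_in (Om : R -> R -> Prop) (g : R -> R * R) : Prop :=
  cont_path g /\ forall t, unit_I t -> in_set Om (g t).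

Definition domain (Om : R -> R -> Prop) : Prop :=
  (exists u v, Om u v) /\
  open (in_set Om) /\
  (forall p q, in_set Om p -> in_set Om q ->
     exists g, path_in Om g /\ g 0 = p /\ g 1 = q).

Definition simply_connected_domain (Om : R -> R -> Prop) : Prop :=
  domain Om /\
  forall g, path_in Om g -> g 0 = g 1 ->
    exists H : R * R -> R * R,
      cont_sq H /\ (forall p, unit_sq p -> in_set Om (H p)) /\
      (forall t, unit_I t -> H (0, t) = g t /\ H (1, t) = g 0) /\
      (forall s, unit_I s -> H (s, 0) = g 0 /\ H (s, 1) = g 0).

Definition pu (f : R -> R -> R) (u v : R) : R := Derive (fun x => f x v) u.
Definition pv (f : R -> R -> R) (u v : R) : R := Derive (fun y => f u y) v.

Definition C1_on (Om : R -> R -> Prop) (f : R -> R -> R) : Prop :=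
  forall u v, Om u v ->
    ex_derive (fun x => f x v) u /\ ex_derive (fun y => f u y) v /\
    continuity_2d_pt f u v /\
    continuity_2d_pt (pu f) u v /\ continuity_2d_pt (pv f) u v.

Definition C2_on (Om : R -> R -> Prop) (f : R -> R -> R) : Prop :=
  C1_on Om f /\ C1_on Om (pu f) /\ C1_on Om (pv f).

Definition ReF (g : R -> R -> C) : R -> R -> R := fun u v => fst (g u v).
Definition ImF (g : R -> R -> C) : R -> R -> R := fun u v => snd (g u v).
Definition CC2_on (Om : R -> R -> Prop) (g : R -> R -> C) : Prop :=
  C2_on Om (ReF g) /\ C2_on Om (ImF g).

Definition Cpu (g : R -> R -> C) (u v : R) : C := (pu (ReF g) u v, pu (ImF g) u v).
Definition Cpv (g : R -> R -> C) (u v : R) : C := (pv (ReF g) u v, pv (ImF g) u v).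

Definition dz (g : R -> R -> C) (u v : R) : C :=
  (RtoC (/ 2) * (Cpu g u v - Ci * Cpv g u v))%C.
Definition dzb (g : R -> R -> C) (u v : R) : C :=
  (RtoC (/ 2) * (Cpu g u v + Ci * Cpv g u v))%C.

Definition cplx (f : R -> R -> R) : R -> R -> C := fun u v => RtoC (f u v).

Definition WD2 (Om : R -> R -> Prop) (h : R -> R -> C) (M N : R -> R -> R) : Prop :=
  CC2_on Om h /\ C2_on Om M /\ C2_on Om N /\
  forall u v, Om u v ->
    h u v <> RtoC 0 /\
    dzb h u v = RtoC 0 /\
    dzb (dz (cplx M)) u v = (RtoC (fst (h u v)) * dzb (dz (cplx N)) u v)%C /\
    (dz (cplx M) u v - RtoC (fst (h u v)) * dz (cplx N) u v)%C <> RtoC 0.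

Definition cis (t : R) : C := (cos t, sin t).

(* Writing [(A, B)] for twice the real part and minus twice the imaginary part of the
   prescribed [(M_tau)_z], the equation asks for a function with gradient [(A, B)].
   By the Cauchy-Riemann equations for [h], [A_v - B_u] is [sin tau] times
   [4 (M_zzbar - Re h N_zzbar) = 0], so the form [A du + B dv] is closed.  On a simply
   connected domain closed [C^1] forms are exact: on small squares corner integrals
   give local primitives, chaining them along fine subdivisions defines path
   integrals, and cutting a null-homotopy into a fine grid of squares shows that
   loop integrals vanish.  For the rotated triple, [h_tau] is a constant multiple of
   [h], [(M_tau)_zzbar = (div (A, B) + i (A_v - B_u)) / 4 = Re h_tau N_zzbar], and
   [(M_tau)_z - Re h_tau N_z = e^{i tau} (M_z - Re h N_z) <> 0]. *)

From Stdlib Require Import Reals Lra Lia Classical ClassicalEpsilon FunctionalExtensionality.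
From Coquelicot Require Import Coquelicot.
Open Scope R_scope.

Lemma is_derive_Rplus (f g : R -> R) x df dg :
  is_derive f x df -> is_derive g x dg -> is_derive (fun t => f t + g t) x (df + dg).
Proof. intros. apply (is_derive_plus f g); auto. Qed.

Lemma is_derive_Rminus (f g : R -> R) x df dg :
  is_derive f x df -> is_derive g x dg -> is_derive (fun t => f t - g t) x (df - dg).
Proof. intros. apply (is_derive_minus f g); auto. Qed.

Lemma is_derive_const_plus (f : R -> R) k x l :
  is_derive f x l -> is_derive (fun t => k + f t) x l.
Proof.
  intros H. replace l with (0 + l) by ring.
  apply is_derive_Rplus; [apply (is_derive_const k x) | exact H].
Qed.

Lemma continuity_2d_pt_slice_u (f : R -> R -> R) u v :
  continuity_2d_pt f u v -> continuous (fun x => f x v) u.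
Proof.
  intros H. apply continuity_2d_pt_filterlim in H.
  apply (filterlim_comp _ _ _ (fun x => (x, v)) (fun z => f (fst z) (snd z)) _ (locally (u, v))).
  2: exact H.
  intros P [e He]. exists e. intros x Hx. apply He. split; [exact Hx | apply ball_center].
Qed.

Lemma continuity_2d_pt_slice_v (f : R -> R -> R) u v :
  continuity_2d_pt f u v -> continuous (fun y => f u y) v.
Proof.
  intros H. apply continuity_2d_pt_filterlim in H.
  apply (filterlim_comp _ _ _ (fun y => (u, y)) (fun z => f (fst z) (snd z)) _ (locally (u, v))).
  2: exact H.
  intros P [e He]. exists e. intros y Hy. apply He. split; [apply ball_center | exact Hy].
Qed.

Section C1Projections.
Variables (Om : R -> R -> Prop) (f : R -> R -> R) (u v : R).
Hypotheses (Hf : C1_on Om f) (Huv : Om u v).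

Lemma C1_on_ex_derive_u : ex_derive (fun x => f x v) u.
Proof. exact (proj1 (Hf u v Huv)). Qed.
Lemma C1_on_ex_derive_v : ex_derive (fun y => f u y) v.
Proof. exact (proj1 (proj2 (Hf u v Huv))). Qed.
Lemma C1_on_continuity : continuity_2d_pt f u v.
Proof. exact (proj1 (proj2 (proj2 (Hf u v Huv)))). Qed.
Lemma C1_on_continuity_pu : continuity_2d_pt (pu f) u v.
Proof. exact (proj1 (proj2 (proj2 (proj2 (Hf u v Huv))))). Qed.
Lemma C1_on_continuity_pv : continuity_2d_pt (pv f) u v.
Proof. exact (proj2 (proj2 (proj2 (proj2 (Hf u v Huv))))). Qed.

End C1Projections.

(** * Squares in the plane *)

Definition in_square (c : R * R) (r : R) (q : R * R) : Prop :=
  Rabs (fst q - fst c) < r /\ Rabs (snd q - snd c) < r.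

Definition square_in (Om : R -> R -> Prop) (c : R * R) (r : R) : Prop :=
  0 < r /\ forall q, in_square c r q -> in_set Om q.

Lemma open_square_in (Om : R -> R -> Prop) : open (in_set Om) ->
  forall p, in_set Om p -> exists r : posreal, square_in Om p r.
Proof.
  intros Ho p Hp. destruct (Ho p Hp) as [e He].
  exists e. split; [apply cond_pos |]. intros q [H1 H2]. apply He. split; assumption.
Qed.

Lemma in_square_center (p : R * R) (r : posreal) : in_square p r p.
Proof. split; rewrite Rminus_eq_0, Rabs_R0; apply cond_pos. Qed.

Lemma Rabs_between (x y t c r : R) : Rabs (x - c) < r -> Rabs (y - c) < r ->
  Rmin x y <= t <= Rmax x y -> Rabs (t - c) < r.
Proof.
  intros H1 H2 [H3 H4]. apply Rabs_lt_between in H1. apply Rabs_lt_between in H2.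
  apply Rabs_lt_between. unfold Rmin, Rmax in *. destruct (Rle_dec x y); lra.
Qed.

Lemma in_square_open c r q : in_square c r q -> exists e : posreal,
  forall q', Rabs (fst q' - fst q) < e -> Rabs (snd q' - snd q) < e -> in_square c r q'.
Proof.
  intros [H1 H2].
  assert (Hm : 0 < Rmin (r - Rabs (fst q - fst c)) (r - Rabs (snd q - snd c)))
    by (apply Rmin_glb_lt; lra).
  exists (mkposreal _ Hm). simpl. intros q' H3 H4.
  pose proof (Rmin_l (r - Rabs (fst q - fst c)) (r - Rabs (snd q - snd c))).
  pose proof (Rmin_r (r - Rabs (fst q - fst c)) (r - Rabs (snd q - snd c))).
  split.
  - replace (fst q' - fst c) with ((fst q' - fst q) + (fst q - fst c)) by ring.
    eapply Rle_lt_trans; [apply Rabs_triang | lra].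
  - replace (snd q' - snd c) with ((snd q' - snd q) + (snd q - snd c)) by ring.
    eapply Rle_lt_trans; [apply Rabs_triang | lra].
Qed.

Lemma in_square_locally_u c r q : in_square c r q ->
  locally (fst q) (fun x => in_square c r (x, snd q)).
Proof.
  intros Hq. destruct (in_square_open c r q Hq) as [e He]. exists e. intros x Hx.
  apply He; simpl; [exact Hx | rewrite Rminus_eq_0, Rabs_R0; apply cond_pos].
Qed.

Lemma in_square_locally_v c r q : in_square c r q ->
  locally (snd q) (fun y => in_square c r (fst q, y)).
Proof.
  intros Hq. destruct (in_square_open c r q Hq) as [e He]. exists e. intros y Hy.
  apply He; simpl; [rewrite Rminus_eq_0, Rabs_R0; apply cond_pos | exact Hy].
Qed.

(** * Paths, subdivisions and homotopies *)

Fixpoint psum (f : nat -> R) (n : nat) : R :=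
  match n with O => 0 | S n => psum f n + f n end.

Lemma psum_ext f g n : (forall k, (k < n)%nat -> f k = g k) -> psum f n = psum g n.
Proof.
  induction n; simpl; intros H; [reflexivity |].
  rewrite IHn, H; [reflexivity | lia | intros k Hk; apply H; lia].
Qed.

Lemma psum_add f n m : psum f (n + m) = psum f n + psum (fun j => f (n + j)%nat) m.
Proof.
  induction m; simpl; [rewrite Nat.add_0_r; ring |].
  rewrite Nat.add_succ_r. simpl. rewrite IHm. ring.
Qed.

Lemma psum_mul f n m :
  psum f (n * m) = psum (fun i => psum (fun j => f (i * m + j)%nat) m) n.
Proof. induction n; simpl; [reflexivity |]. rewrite Nat.add_comm, psum_add, IHn. reflexivity. Qed.

Lemma psum_telescope (F : nat -> R) n : psum (fun j => F (S j) - F j) n = F n - F 0%nat.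
Proof. induction n; simpl; [ring |]. rewrite IHn. ring. Qed.

Lemma psum_minus f g n : psum (fun j => f j - g j) n = psum f n - psum g n.
Proof. induction n; simpl; [ring |]. rewrite IHn. ring. Qed.

Lemma psum_opp f n : psum (fun j => - f j) n = - psum f n.
Proof. induction n; simpl; [ring |]. rewrite IHn. ring. Qed.

Lemma psum_zero f n : (forall k, (k < n)%nat -> f k = 0) -> psum f n = 0.
Proof.
  intros H. rewrite (psum_ext f (fun _ => 0)) by auto. clear H.
  induction n; simpl; [reflexivity |]. rewrite IHn. ring.
Qed.

Lemma psum_rev f n : psum f n = psum (fun k => f (n - S k)%nat) n.
Proof.
  induction n; [reflexivity |].
  change (psum f (S n)) with (psum f n + f n). rewrite IHn.
  pose proof (psum_add (fun k => f (S n - S k)%nat) 1 n) as E. simpl in E |- *.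
  rewrite E. replace (n - 0)%nat with n by lia. ring.
Qed.

Definition grid (n k : nat) : R := INR k / INR n.

Lemma grid_0 n : grid n 0 = 0.
Proof. unfold grid. simpl. unfold Rdiv. ring. Qed.

Lemma grid_n n : (0 < n)%nat -> grid n n = 1.
Proof. intros H. unfold grid. apply lt_0_INR in H. field. lra. Qed.

Lemma grid_nonneg n k : 0 <= grid n k.
Proof.
  unfold grid. destruct n; [unfold Rdiv; simpl; rewrite Rinv_0; lra |].
  apply Rdiv_le_0_compat; [apply pos_INR | apply lt_0_INR; lia].
Qed.

Lemma grid_unit n k : (k <= n)%nat -> (0 < n)%nat -> 0 <= grid n k <= 1.
Proof.
  intros H1 H2. split; [apply grid_nonneg |]. unfold grid.
  apply lt_0_INR in H2. apply le_INR in H1.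
  apply (Rmult_le_reg_r (INR n)); auto. field_simplify; lra.
Qed.

Lemma grid_step n k : (0 < n)%nat -> grid n (S k) - grid n k = / INR n.
Proof. intros H. unfold grid. rewrite S_INR. apply lt_0_INR in H. field. lra. Qed.

Lemma grid_le_S n k : (0 < n)%nat -> grid n k <= grid n (S k).
Proof.
  intros H. pose proof (grid_step n k H).
  assert (0 < / INR n) by (apply Rinv_0_lt_compat, lt_0_INR; auto). lra.
Qed.

Lemma grid_refine (n m i j : nat) : (0 < n)%nat -> (0 < m)%nat -> (j <= m)%nat ->
  grid n i <= grid (n * m) (i * m + j) <= grid n (S i).
Proof.
  intros Hn Hm Hj. unfold grid. rewrite mult_INR, plus_INR, mult_INR, S_INR.
  apply lt_0_INR in Hn. apply lt_0_INR in Hm. apply le_INR in Hj.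
  replace ((INR i * INR m + INR j) / (INR n * INR m)) with ((INR i + INR j / INR m) / INR n)
    by (field; lra).
  assert (0 <= INR j / INR m <= 1).
  { split; [apply Rdiv_le_0_compat; [apply pos_INR | lra] |].
    apply (Rmult_le_reg_r (INR m)); auto. field_simplify; lra. }
  assert (0 < / INR n) by (apply Rinv_0_lt_compat; lra).
  unfold Rdiv. split; apply Rmult_le_compat_r; lra.
Qed.

Lemma grid_mul n m k : (0 < n)%nat -> (0 < m)%nat -> grid (n * m) (k * m) = grid n k.
Proof.
  intros Hn Hm. unfold grid. rewrite !mult_INR.
  apply lt_0_INR in Hn. apply lt_0_INR in Hm. field. lra.
Qed.

Lemma grid_double n k : (0 < n)%nat -> grid (n + n) k = grid n k / 2.
Proof. intros H. unfold grid. rewrite plus_INR. apply lt_0_INR in H. field. lra. Qed.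

Lemma grid_shift n j : (0 < n)%nat -> grid n (n + j) = 1 + grid n j.
Proof. intros H. unfold grid. rewrite plus_INR. apply lt_0_INR in H. field. lra. Qed.

Lemma grid_rev n k : (k <= n)%nat -> (0 < n)%nat -> grid n (n - k) = 1 - grid n k.
Proof. intros H1 H2. unfold grid. rewrite minus_INR by auto. apply lt_0_INR in H2. field. lra. Qed.

Lemma cont_path_ball g : cont_path g -> forall t, unit_I t -> forall e : posreal,
  exists d : posreal, forall s, unit_I s -> Rabs (s - t) < d -> ball (g t) e (g s).
Proof.
  intros H t Ht e. destruct (H t Ht (ball (g t) e) (locally_ball (g t) e)) as [d Hd].
  exists d. intros s Hs Hst. apply Hd; auto.
Qed.

Lemma ball_cont_path g : (forall t, unit_I t -> forall e : posreal,
  exists d : posreal, forall s, unit_I s -> Rabs (s - t) < d -> ball (g t) e (g s)) ->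
  cont_path g.
Proof.
  intros H t Ht P [e He]. destruct (H t Ht e) as [d Hd]. exists d. intros s Hs Hus.
  apply He, Hd; auto.
Qed.

Lemma cont_sq_ball (K : R * R -> R * R) : cont_sq K -> forall p, unit_sq p -> forall e : posreal,
  exists d : posreal, forall q, unit_sq q ->
    Rabs (fst q - fst p) < d -> Rabs (snd q - snd p) < d -> ball (K p) e (K q).
Proof.
  intros H p Hp e. destruct (H p Hp (ball (K p) e) (locally_ball (K p) e)) as [d Hd].
  exists d. intros q Hq H1 H2. apply Hd; auto. split; auto.
Qed.

Definition concat (g1 g2 : R -> R * R) (t : R) : R * R :=
  if Rle_dec t (/2) then g1 (2 * t) else g2 (2 * t - 1).
Definition reverse (g : R -> R * R) (t : R) : R * R := g (1 - t).
Definition segment (p q : R * R) (t : R) : R * R :=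
  (fst p + t * (fst q - fst p), snd p + t * (snd q - snd p)).

Lemma concat_l g1 g2 t : t <= /2 -> concat g1 g2 t = g1 (2 * t).
Proof. intros H. unfold concat. destruct (Rle_dec t (/2)); [reflexivity | lra]. Qed.

Lemma concat_r g1 g2 t : g1 1 = g2 0 -> /2 <= t -> concat g1 g2 t = g2 (2 * t - 1).
Proof.
  intros E H. unfold concat. destruct (Rle_dec t (/2)); [| reflexivity].
  replace t with (/2) by lra. replace (2 * /2) with 1 by field. rewrite E. f_equal. field.
Qed.

Lemma in_square_segment c r p q t : in_square c r p -> in_square c r q -> 0 <= t <= 1 ->
  in_square c r (segment p q t).
Proof.
  intros [H1 H2] [H3 H4] Ht.
  assert (Hconv : forall x y z, Rabs (x - z) < r -> Rabs (y - z) < r ->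
            Rabs (x + t * (y - x) - z) < r).
  { intros x y z Hx Hy.
    replace (x + t * (y - x) - z) with ((1 - t) * (x - z) + t * (y - z)) by ring.
    eapply Rle_lt_trans; [apply Rabs_triang |].
    rewrite !Rabs_mult, (Rabs_right (1 - t)), (Rabs_right t) by lra.
    destruct (Req_dec t 0); [subst; lra | nra]. }
  split; apply Hconv; auto.
Qed.

Section Paths.
Variable Om : R -> R -> Prop.

Lemma path_in_concat g1 g2 : path_in Om g1 -> path_in Om g2 -> g1 1 = g2 0 ->
  path_in Om (concat g1 g2).
Proof.
  intros [C1 I1] [C2 I2] E. split.
  - apply ball_cont_path. intros t Ht e.
    destruct (Rtotal_order t (/2)) as [Hlt | [Heq | Hgt]].
    + destruct (cont_path_ball g1 C1 (2 * t) ltac:(unfold unit_I in *; lra) e) as [d Hd].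
      assert (Hp : 0 < Rmin (d / 2) (/2 - t))
        by (apply Rmin_glb_lt; [pose proof (cond_pos d) |]; lra).
      exists (mkposreal _ Hp). simpl. intros s Hs Hst.
      pose proof (Rmin_l (d / 2) (/2 - t)). pose proof (Rmin_r (d / 2) (/2 - t)).
      apply Rabs_lt_between in Hst.
      rewrite !concat_l by lra. apply Hd; [unfold unit_I in *; lra | apply Rabs_lt_between; lra].
    + subst t. destruct (cont_path_ball g1 C1 1 ltac:(unfold unit_I; lra) e) as [d1 Hd1].
      destruct (cont_path_ball g2 C2 0 ltac:(unfold unit_I; lra) e) as [d2 Hd2].
      assert (Hp : 0 < Rmin d1 d2 / 2)
        by (pose proof (Rmin_glb_lt d1 d2 0 (cond_pos d1) (cond_pos d2)); lra).
      exists (mkposreal _ Hp). simpl. intros s Hs Hst.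
      pose proof (Rmin_l d1 d2). pose proof (Rmin_r d1 d2).
      apply Rabs_lt_between in Hst.
      rewrite concat_l by lra. replace (2 * /2) with 1 by field.
      destruct (Rle_dec s (/2)).
      * rewrite concat_l by lra.
        apply Hd1; [unfold unit_I in *; lra | apply Rabs_lt_between; lra].
      * rewrite concat_r, E by (auto; lra).
        apply Hd2; [unfold unit_I in *; lra | apply Rabs_lt_between; lra].
    + destruct (cont_path_ball g2 C2 (2 * t - 1) ltac:(unfold unit_I in *; lra) e) as [d Hd].
      assert (Hp : 0 < Rmin (d / 2) (t - /2))
        by (apply Rmin_glb_lt; [pose proof (cond_pos d) |]; lra).
      exists (mkposreal _ Hp). simpl. intros s Hs Hst.
      pose proof (Rmin_l (d / 2) (t - /2)). pose proof (Rmin_r (d / 2) (t - /2)).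
      apply Rabs_lt_between in Hst.
      rewrite !concat_r by (auto; lra).
      apply Hd; [unfold unit_I in *; lra | apply Rabs_lt_between; lra].
  - intros t Ht. destruct (Rle_dec t (/2)).
    + rewrite concat_l by auto. apply I1. unfold unit_I in *; lra.
    + rewrite concat_r by (auto; lra). apply I2. unfold unit_I in *; lra.
Qed.

Lemma path_in_reverse g : path_in Om g -> path_in Om (reverse g).
Proof.
  intros [C I]. split.
  - apply ball_cont_path. intros t Ht e.
    destruct (cont_path_ball g C (1 - t) ltac:(unfold unit_I in *; lra) e) as [d Hd].
    exists d. intros s Hs Hst. unfold reverse. apply Hd; [unfold unit_I in *; lra |].
    replace (1 - s - (1 - t)) with (- (s - t)) by ring. rewrite Rabs_Ropp. auto.
  - intros t Ht. apply I. unfold unit_I in *; lra.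
Qed.

Lemma path_in_segment c r p q : square_in Om c r -> in_square c r p -> in_square c r q ->
  path_in Om (segment p q).
Proof.
  intros Hs Hp Hq. split.
  - apply ball_cont_path. intros t Ht e.
    set (K := 1 + Rabs (fst q - fst p) + Rabs (snd q - snd p)).
    assert (HK : 0 < K)
      by (unfold K; pose proof (Rabs_pos (fst q - fst p)); pose proof (Rabs_pos (snd q - snd p)); lra).
    assert (Hd : 0 < e / K) by (apply Rdiv_lt_0_compat; [apply cond_pos | auto]).
    exists (mkposreal _ Hd). simpl. intros s Hs' Hst.
    assert (Hk : Rabs (s - t) * K < e).
    { apply (Rmult_lt_compat_r K) in Hst; auto. field_simplify in Hst; lra. }
    pose proof (Rabs_pos (s - t)). pose proof (Rabs_pos (fst q - fst p)).
    pose proof (Rabs_pos (snd q - snd p)).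
    unfold segment; split; simpl; unfold ball; simpl; unfold AbsRing_ball, abs, minus, plus, opp; simpl.
    + replace (fst p + s * (fst q - fst p) + - (fst p + t * (fst q - fst p)))
        with ((s - t) * (fst q - fst p)) by ring.
      rewrite Rabs_mult. unfold K in Hk. nra.
    + replace (snd p + s * (snd q - snd p) + - (snd p + t * (snd q - snd p)))
        with ((s - t) * (snd q - snd p)) by ring.
      rewrite Rabs_mult. unfold K in Hk. nra.
  - intros t Ht. apply (proj2 Hs). apply in_square_segment; auto.
Qed.

Definition null_homotopic (g : R -> R * R) : Prop :=
  exists H : R * R -> R * R,
    cont_sq H /\ (forall p, unit_sq p -> in_set Om (H p)) /\
    (forall t, unit_I t -> H (0, t) = g t /\ H (1, t) = g 0) /\
    (forall s, unit_I s -> H (s, 0) = g 0 /\ H (s, 1) = g 0).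

Definition fine_subdivision (g : R -> R * R) (n : nat) : Prop :=
  forall k, (k < n)%nat -> exists c r, square_in Om c r /\
    forall t, grid n k <= t <= grid n (S k) -> in_square c r (g t).

Hypothesis Hop : open (in_set Om).

(* Lebesgue number argument: [compactness_value_1d] bounds from below a radius
   function which at each time gives a neighbourhood mapped into one square. *)
Lemma path_fine_subdivision g : path_in Om g -> exists n, (0 < n)%nat /\ fine_subdivision g n.
Proof.
  intros [Hc Hin].
  assert (Hex : forall t, exists d : posreal, unit_I t -> exists c r, square_in Om c r /\
     forall s, unit_I s -> Rabs (s - t) < d -> in_square c r (g s)).
  { intros t. destruct (classic (unit_I t)) as [Ht | Ht].
    - destruct (open_square_in Om Hop (g t) (Hin t Ht)) as [r Hr].
      destruct (cont_path_ball g Hc t Ht r) as [d Hd]. exists d. intros _.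
      exists (g t), r. split; [exact Hr |]. exact Hd.
    - exists (mkposreal 1 Rlt_0_1). intros H; contradiction. }
  destruct (choice _ Hex) as [dl Hdl].
  assert (Hpos : forall t, 0 < dl t / 2) by (intros t; pose proof (cond_pos (dl t)); lra).
  destruct (compactness_value_1d 0 1 (fun t => mkposreal _ (Hpos t))) as [d0 Hd0].
  destruct (archimed_cor1 d0 (cond_pos d0)) as [N [HN1 HN2]].
  exists N. split; [exact HN2 |]. intros k Hk.
  assert (Hx : 0 <= grid N k <= 1) by (apply grid_unit; lia).
  apply NNPP. intros Hn. apply (Hd0 (grid N k) Hx). intros [t [Ht [H1 H2]]]. apply Hn.
  simpl in H1, H2.
  destruct (Hdl t Ht) as [c [r [Hs Hr]]]. exists c, r. split; [exact Hs |].
  intros s Hs'. pose proof (grid_step N k HN2). pose proof (grid_unit N (S k) ltac:(lia) HN2).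
  apply Hr; [unfold unit_I; lra |].
  replace (s - t) with ((s - grid N k) + (grid N k - t)) by ring.
  eapply Rle_lt_trans; [apply Rabs_triang |]. rewrite (Rabs_right (s - grid N k)) by lra. lra.
Qed.

Lemma homotopy_fine_grid (K : R * R -> R * R) : cont_sq K ->
  (forall p, unit_sq p -> in_set Om (K p)) ->
  exists N, (0 < N)%nat /\ forall i j, (i < N)%nat -> (j < N)%nat ->
    exists c r, square_in Om c r /\
      forall s t, grid N i <= s <= grid N (S i) -> grid N j <= t <= grid N (S j) ->
        in_square c r (K (s, t)).
Proof.
  intros Hc Hin.
  assert (Hex : forall p, exists d : posreal, unit_sq p -> exists c r, square_in Om c r /\
     forall q, unit_sq q -> Rabs (fst q - fst p) < d -> Rabs (snd q - snd p) < d ->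
       in_square c r (K q)).
  { intros p. destruct (classic (unit_sq p)) as [Hp | Hp].
    - destruct (open_square_in Om Hop (K p) (Hin _ Hp)) as [r Hr].
      destruct (cont_sq_ball K Hc p Hp r) as [d Hd]. exists d. intros _.
      exists (K p), r. split; [exact Hr |]. exact Hd.
    - exists (mkposreal 1 Rlt_0_1). intros H; contradiction. }
  destruct (choice _ Hex) as [dl Hdl].
  assert (Hpos : forall u v, 0 < dl (u, v) / 2)
    by (intros u v; pose proof (cond_pos (dl (u, v))); lra).
  destruct (compactness_value_2d 0 1 0 1 (fun u v => mkposreal _ (Hpos u v))) as [d0 Hd0].
  destruct (archimed_cor1 d0 (cond_pos d0)) as [N [HN1 HN2]].
  exists N. split; [exact HN2 |]. intros i j Hi Hj.
  assert (Hx : 0 <= grid N i <= 1) by (apply grid_unit; lia).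
  assert (Hy : 0 <= grid N j <= 1) by (apply grid_unit; lia).
  apply NNPP. intros Hn. apply (Hd0 (grid N i) (grid N j) Hx Hy).
  intros [u [v [Hu [Hv [H1 [H2 H3]]]]]]. apply Hn. simpl in H1, H2, H3.
  destruct (Hdl (u, v) (conj Hu Hv)) as [c [r [Hs Hr]]]. exists c, r. split; [exact Hs |].
  intros s t Hs' Ht.
  pose proof (grid_step N i HN2). pose proof (grid_unit N (S i) ltac:(lia) HN2).
  pose proof (grid_step N j HN2). pose proof (grid_unit N (S j) ltac:(lia) HN2).
  apply Hr; simpl; [split; unfold unit_I; simpl; lra | |].
  - replace (s - u) with ((s - grid N i) + (grid N i - u)) by ring.
    eapply Rle_lt_trans; [apply Rabs_triang |]. rewrite (Rabs_right (s - grid N i)) by lra. lra.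
  - replace (t - v) with ((t - grid N j) + (grid N j - v)) by ring.
    eapply Rle_lt_trans; [apply Rabs_triang |]. rewrite (Rabs_right (t - grid N j)) by lra. lra.
Qed.

End Paths.

(** * Corner integrals of a closed form *)

(* The integral of [a dx + b dy] along the corner path [p -> (fst q, snd p) -> q]. *)
Definition corner_int (a b : R -> R -> R) (p q : R * R) : R :=
  RInt (fun x => a x (snd p)) (fst p) (fst q) + RInt (fun y => b (fst q) y) (snd p) (snd q).

Lemma corner_int_refl a b p : corner_int a b p p = 0.
Proof.
  unfold corner_int. rewrite !(RInt_point (V := R_CompleteNormedModule)).
  unfold zero; simpl. ring.
Qed.

Lemma const_on_segment (g : R -> R) x0 x1 :
  (forall x, Rmin x0 x1 <= x <= Rmax x0 x1 -> is_derive g x 0) -> g x0 = g x1.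
Proof.
  intros H. destruct (MVT_gen g x0 x1 (fun _ => 0)) as [c [_ Hc]].
  - intros x Hx. apply H. lra.
  - intros x Hx. apply continuity_pt_filterlim.
    apply (ex_derive_continuous (K := R_AbsRing) (V := R_NormedModule)).
    exists 0. apply H. exact Hx.
  - lra.
Qed.

Lemma const_on_square (f : R * R -> R) c r :
  (forall q, in_square c r q -> is_derive (fun x => f (x, snd q)) (fst q) 0 /\
                                is_derive (fun y => f (fst q, y)) (snd q) 0) ->
  forall q q', in_square c r q -> in_square c r q' -> f q = f q'.
Proof.
  intros H [q1 q2] [q1' q2'] [H1 H2] [H3 H4]; simpl in *.
  transitivity (f (q1', q2)).
  - apply (const_on_segment (fun x => f (x, q2))). intros x Hx.
    apply (H (x, q2)). split; simpl; [exact (Rabs_between _ _ _ _ _ H1 H3 Hx) | exact H2].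
  - apply (const_on_segment (fun y => f (q1', y))). intros y Hy.
    apply (H (q1', y)). split; simpl; [exact H3 | exact (Rabs_between _ _ _ _ _ H2 H4 Hy)].
Qed.

Section ClosedForm.
Variables (Om : R -> R -> Prop) (a b : R -> R -> R).
Hypotheses (Ha : C1_on Om a) (Hb : C1_on Om b).
Hypothesis Hclosed : forall u v, Om u v -> pv a u v = pu b u v.
Hypothesis Hop : open (in_set Om).

Lemma ex_RInt_square_u c r y x1 x2 : square_in Om c r ->
  in_square c r (x1, y) -> in_square c r (x2, y) -> ex_RInt (fun x => a x y) x1 x2.
Proof.
  intros [_ Hs] [H1 H2] [H3 H4]. apply (ex_RInt_continuous (V := R_CompleteNormedModule)).
  intros z Hz. apply continuity_2d_pt_slice_u, (C1_on_continuity Om); [exact Ha |].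
  apply (Hs (z, y)). split; simpl in *; [exact (Rabs_between _ _ _ _ _ H1 H3 Hz) | exact H2].
Qed.

Lemma ex_RInt_square_v c r x y1 y2 : square_in Om c r ->
  in_square c r (x, y1) -> in_square c r (x, y2) -> ex_RInt (fun y => b x y) y1 y2.
Proof.
  intros [_ Hs] [H1 H2] [H3 H4]. apply (ex_RInt_continuous (V := R_CompleteNormedModule)).
  intros z Hz. apply continuity_2d_pt_slice_v, (C1_on_continuity Om); [exact Hb |].
  apply (Hs (x, z)). split; simpl in *; [exact H1 | exact (Rabs_between _ _ _ _ _ H2 H4 Hz)].
Qed.

Lemma corner_int_derive_v c r p q : square_in Om c r -> in_square c r p -> in_square c r q ->
  is_derive (fun y => corner_int a b p (fst q, y)) (snd q) (b (fst q) (snd q)).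
Proof.
  intros Hs Hp Hq. unfold corner_int; simpl. apply is_derive_const_plus.
  apply (is_derive_RInt (fun y => b (fst q) y) (fun y => RInt (fun y => b (fst q) y) (snd p) y) (snd p)).
  - apply (filter_imp (fun y => in_square c r (fst q, y))); [| apply in_square_locally_v; auto].
    intros y Hy. apply (RInt_correct (V := R_CompleteNormedModule)).
    apply (ex_RInt_square_v c r); auto. destruct Hp, Hq; split; auto.
  - apply continuity_2d_pt_slice_v, (C1_on_continuity Om); [exact Hb | apply (proj2 Hs), Hq].
Qed.

(* Differentiating the vertical leg under the integral sign produces [RInt (pu b)];
   closedness turns it into [RInt (pv a)], which telescopes to [a q - a (fst q, snd p)]. *)
Lemma corner_int_derive_u c r p q : square_in Om c r -> in_square c r p -> in_square c r q ->
  is_derive (fun x => corner_int a b p (x, snd q)) (fst q) (a (fst q) (snd q)).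
Proof.
  intros Hs Hp Hq. unfold corner_int; simpl.
  assert (Hpq : in_square c r (fst q, snd p)) by (destruct Hp, Hq; split; auto).
  assert (Hseg : forall t, Rmin (snd p) (snd q) <= t <= Rmax (snd p) (snd q) ->
                   Om (fst q) t).
  { intros t Ht. apply (proj2 Hs (fst q, t)). destruct Hq as [Hq1 Hq2], Hp as [Hp1 Hp2].
    split; [exact Hq1 | exact (Rabs_between _ _ _ _ _ Hp2 Hq2 Ht)]. }
  assert (Hint : RInt (fun t => Derive (fun x => b x t) (fst q)) (snd p) (snd q)
                 = a (fst q) (snd q) - a (fst q) (snd p)).
  { rewrite (RInt_ext _ (Derive (fun y => a (fst q) y))).
    - apply RInt_Derive.
      + intros t Ht. apply (C1_on_ex_derive_v Om); auto.
      + intros t Ht. apply (continuity_2d_pt_slice_v (pv a)), (C1_on_continuity_pv Om); auto.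
    - intros t Ht. symmetry. apply Hclosed, Hseg. lra. }
  replace (a (fst q) (snd q)) with
    (a (fst q) (snd p) + RInt (fun t => Derive (fun x => b x t) (fst q)) (snd p) (snd q))
    by (rewrite Hint; ring).
  apply is_derive_Rplus.
  - apply (is_derive_RInt (fun x => a x (snd p)) (fun x => RInt (fun x => a x (snd p)) (fst p) x) (fst p)).
    + apply (filter_imp (fun x => in_square c r (x, snd p))); [| exact (in_square_locally_u c r _ Hpq)].
      intros x Hx. apply (RInt_correct (V := R_CompleteNormedModule)).
      apply (ex_RInt_square_u c r (snd p) (fst p) x Hs); [destruct p; exact Hp | exact Hx].
    + apply continuity_2d_pt_slice_u, (C1_on_continuity Om); [exact Ha | exact (proj2 Hs _ Hpq)].
  - apply is_derive_RInt_param.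
    + apply (filter_imp (fun x => in_square c r (x, snd q))); [| apply in_square_locally_u; auto].
      intros x Hx t Ht. apply (C1_on_ex_derive_u Om); [exact Hb |].
      apply (proj2 Hs (x, t)). destruct Hx as [Hx1 Hx2], Hp as [Hp1 Hp2].
      split; [exact Hx1 | exact (Rabs_between _ _ _ _ _ Hp2 Hx2 Ht)].
    + intros t Ht. apply (C1_on_continuity_pu Om); auto.
    + apply (filter_imp (fun x => in_square c r (x, snd q))); [| apply in_square_locally_u; auto].
      intros x Hx. apply (ex_RInt_square_v c r); auto. destruct Hx, Hp; split; auto.
Qed.

Lemma corner_int_chasles c r p q x : square_in Om c r ->
  in_square c r p -> in_square c r q -> in_square c r x ->
  corner_int a b p x = corner_int a b p q + corner_int a b q x.
Proof.
  intros Hs Hp Hq Hx.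
  assert (E : corner_int a b p x - corner_int a b q x = corner_int a b p q - corner_int a b q q).
  { apply (const_on_square (fun y => corner_int a b p y - corner_int a b q y) c r); auto.
    intros y Hy. split.
    - replace 0 with (a (fst y) (snd y) - a (fst y) (snd y)) by ring.
      apply (is_derive_Rminus (fun t => corner_int a b p (t, snd y))
                              (fun t => corner_int a b q (t, snd y)));
        eapply corner_int_derive_u; eauto.
    - replace 0 with (b (fst y) (snd y) - b (fst y) (snd y)) by ring.
      apply (is_derive_Rminus (fun t => corner_int a b p (fst y, t))
                              (fun t => corner_int a b q (fst y, t)));
        eapply corner_int_derive_v; eauto. }
  rewrite corner_int_refl in E. lra.
Qed.

Lemma corner_int_anti c r p q : square_in Om c r -> in_square c r p -> in_square c r q ->
  corner_int a b q p = - corner_int a b p q.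
Proof.
  intros Hs Hp Hq. pose proof (corner_int_chasles c r p q p Hs Hp Hq Hp) as E.
  rewrite corner_int_refl in E. lra.
Qed.

(** * Path integrals of a closed form *)

Definition corner_sum (g : R -> R * R) (n : nat) : R :=
  psum (fun k => corner_int a b (g (grid n k)) (g (grid n (S k)))) n.

Lemma corner_sum_square c r (P : nat -> R * R) m : square_in Om c r ->
  (forall j, (j <= m)%nat -> in_square c r (P j)) ->
  psum (fun j => corner_int a b (P j) (P (S j))) m = corner_int a b (P 0%nat) (P m).
Proof.
  intros Hs HP. induction m; simpl; [rewrite corner_int_refl; reflexivity |].
  rewrite IHm by (intros; apply HP; lia). symmetry.
  apply (corner_int_chasles c r); [exact Hs | apply HP; lia ..].
Qed.

Lemma fine_subdivision_mul g n m : (0 < n)%nat -> (0 < m)%nat ->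
  fine_subdivision Om g n -> fine_subdivision Om g (n * m).
Proof.
  intros Hn Hm Hg k Hk.
  assert (Ek : k = ((k / m) * m + k mod m)%nat)
    by (rewrite Nat.mul_comm; apply Nat.div_mod; lia).
  assert (Hj : (k mod m < m)%nat) by (apply Nat.mod_upper_bound; lia).
  assert (Hi : (k / m < n)%nat)
    by (apply Nat.Div0.div_lt_upper_bound; rewrite Nat.mul_comm; lia).
  revert Ek Hj Hi. generalize (k / m)%nat (k mod m)%nat. intros i j Ek Hj Hi.
  destruct (Hg i Hi) as [c [r [Hc Hr]]]. exists c, r. split; [exact Hc |].
  intros t Ht. apply Hr. rewrite Ek in Ht.
  replace (S (i * m + j)) with (i * m + S j)%nat in Ht by lia.
  pose proof (grid_refine n m i j Hn Hm ltac:(lia)).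
  pose proof (grid_refine n m i (S j) Hn Hm ltac:(lia)). lra.
Qed.

Lemma corner_sum_mul g n m : (0 < n)%nat -> (0 < m)%nat -> fine_subdivision Om g n ->
  corner_sum g (n * m) = corner_sum g n.
Proof.
  intros Hn Hm Hg. unfold corner_sum. rewrite psum_mul. apply psum_ext. intros i Hi.
  destruct (Hg i Hi) as [c [r [Hc Hr]]].
  rewrite (psum_ext _ (fun j => corner_int a b (g (grid (n * m) (i * m + j)))
                                              (g (grid (n * m) (i * m + S j))))).
  2: { intros k _. do 3 f_equal. lia. }
  rewrite (corner_sum_square c r (fun j => g (grid (n * m) (i * m + j)))).
  - rewrite Nat.add_0_r. replace (i * m + m)%nat with (S i * m)%nat by lia.
    rewrite !grid_mul by auto. reflexivity.
  - exact Hc.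
  - intros j Hj. apply Hr, grid_refine; auto.
Qed.

Lemma corner_sum_indep g n m : (0 < n)%nat -> (0 < m)%nat ->
  fine_subdivision Om g n -> fine_subdivision Om g m -> corner_sum g n = corner_sum g m.
Proof.
  intros Hn Hm H1 H2.
  rewrite <- (corner_sum_mul g n m), <- (corner_sum_mul g m n), Nat.mul_comm by auto.
  reflexivity.
Qed.

(* The line integral of [a dx + b dy] along [g], through any fine subdivision;
   on paths without one (impossible for paths in an open [Om]) the value is junk. *)
Definition path_int (g : R -> R * R) : R :=
  corner_sum g (epsilon (inhabits 0%nat) (fun n => (0 < n)%nat /\ fine_subdivision Om g n)).

Lemma path_int_eq g n : (0 < n)%nat -> fine_subdivision Om g n -> path_int g = corner_sum g n.
Proof.
  intros Hn Hg. unfold path_int.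
  destruct (epsilon_spec (inhabits 0%nat) (fun n => (0 < n)%nat /\ fine_subdivision Om g n))
    as [H1 H2]; [exists n; auto |].
  apply corner_sum_indep; auto.
Qed.

Lemma path_int_segment c r p q : square_in Om c r -> in_square c r p -> in_square c r q ->
  path_int (segment p q) = corner_int a b p q.
Proof.
  intros Hs Hp Hq.
  assert (G1 : fine_subdivision Om (segment p q) 1).
  { intros k Hk. exists c, r. split; [exact Hs |]. intros t Ht.
    apply in_square_segment; auto.
    replace k with 0%nat in Ht by lia. rewrite grid_0, grid_n in Ht by lia. lra. }
  rewrite (path_int_eq _ 1 ltac:(lia) G1). unfold corner_sum; simpl.
  rewrite grid_0, grid_n by lia. unfold segment. destruct p, q; simpl.
  rewrite !Rmult_0_l, !Rmult_1_l, !Rplus_0_r.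
  replace (r0 + (r2 - r0)) with r2 by ring. replace (r1 + (r3 - r1)) with r3 by ring. ring.
Qed.

(* Stokes on the grid: the [j]-sums of two consecutive rows of a fine homotopy
   grid differ by a sum of corner integrals around small squares, each zero. *)
Lemma path_int_null_loop g : path_in Om g -> g 0 = g 1 -> null_homotopic Om g ->
  path_int g = 0.
Proof.
  intros Hg Eg [K [Kc [Kin [Kt Ks]]]].
  destruct (homotopy_fine_grid Om Hop K Kc Kin) as [N [HN Hcell]].
  pose (P := fun i j => K (grid N i, grid N j)).
  pose (row := fun i => psum (fun j => corner_int a b (P i j) (P i (S j))) N).
  assert (HU : forall k, (k <= N)%nat -> unit_I (grid N k)) by (intros; apply grid_unit; auto).
  assert (Hstep : forall i, (i < N)%nat -> row (S i) = row i).
  { intros i Hi.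
    assert (E : row (S i) - row i = psum (fun j =>
        corner_int a b (P i (S j)) (P (S i) (S j)) - corner_int a b (P i j) (P (S i) j)) N).
    { unfold row. rewrite <- psum_minus. apply psum_ext. intros j Hj.
      destruct (Hcell i j Hi Hj) as [c [r [Hc Hr]]].
      pose proof (grid_le_S N i HN); pose proof (grid_le_S N j HN).
      assert (I00 : in_square c r (P i j)) by (apply Hr; lra).
      assert (I10 : in_square c r (P (S i) j)) by (apply Hr; lra).
      assert (I01 : in_square c r (P i (S j))) by (apply Hr; lra).
      assert (I11 : in_square c r (P (S i) (S j))) by (apply Hr; lra).
      pose proof (corner_int_chasles c r (P i j) (P (S i) j) (P (S i) (S j)) Hc I00 I10 I11).
      pose proof (corner_int_chasles c r (P i j) (P i (S j)) (P (S i) (S j)) Hc I00 I01 I11).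
      lra. }
    rewrite (psum_telescope (fun j => corner_int a b (P i j) (P (S i) j))) in E.
    unfold P in E. rewrite grid_n, grid_0 in E by auto.
    rewrite (proj2 (Ks _ (HU i ltac:(lia)))), (proj2 (Ks _ (HU (S i) ltac:(lia)))),
      (proj1 (Ks _ (HU i ltac:(lia)))), (proj1 (Ks _ (HU (S i) ltac:(lia)))),
      !corner_int_refl in E.
    lra. }
  assert (Hrow : forall i, (i <= N)%nat -> row i = row 0%nat).
  { induction i; intros Hi; [reflexivity |]. rewrite Hstep by lia. apply IHi. lia. }
  assert (Hlast : row N = 0).
  { unfold row. apply psum_zero. intros j Hj. unfold P.
    rewrite grid_n by auto.
    rewrite (proj2 (Kt _ (HU j ltac:(lia)))), (proj2 (Kt _ (HU (S j) ltac:(lia)))).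
    apply corner_int_refl. }
  assert (Hfine : fine_subdivision Om g N).
  { intros j Hj. destruct (Hcell 0%nat j HN Hj) as [c [r [Hc Hr]]].
    exists c, r. split; [exact Hc |]. intros t Ht.
    assert (Hut : unit_I t).
    { pose proof (HU j ltac:(lia)). pose proof (HU (S j) ltac:(lia)). unfold unit_I in *; lra. }
    rewrite <- (proj1 (Kt t Hut)). apply Hr; [| exact Ht].
    pose proof (grid_le_S N 0 HN). rewrite grid_0 in *. lra. }
  rewrite (path_int_eq g N HN Hfine), <- Hlast, (Hrow N (le_n _)).
  unfold row, corner_sum, P. apply psum_ext. intros j Hj. rewrite grid_0.
  rewrite (proj1 (Kt _ (HU j ltac:(lia)))), (proj1 (Kt _ (HU (S j) ltac:(lia)))).
  reflexivity.
Qed.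

Lemma fine_subdivision_common g1 g2 : path_in Om g1 -> path_in Om g2 ->
  exists n, (0 < n)%nat /\ fine_subdivision Om g1 n /\ fine_subdivision Om g2 n.
Proof.
  intros P1 P2. destruct (path_fine_subdivision Om Hop g1 P1) as [n1 [H1 G1]].
  destruct (path_fine_subdivision Om Hop g2 P2) as [n2 [H2 G2]].
  exists (n1 * n2)%nat. split; [lia | split].
  - apply fine_subdivision_mul; auto.
  - rewrite Nat.mul_comm. apply fine_subdivision_mul; auto.
Qed.

Lemma path_int_concat g1 g2 : path_in Om g1 -> path_in Om g2 -> g1 1 = g2 0 ->
  path_int (concat g1 g2) = path_int g1 + path_int g2.
Proof.
  intros P1 P2 E. destruct (fine_subdivision_common g1 g2 P1 P2) as [n [Hn [G1 G2]]].
  assert (L : forall k, (k <= n)%nat -> concat g1 g2 (grid (n + n) k) = g1 (grid n k)).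
  { intros k Hk. rewrite grid_double by auto. pose proof (grid_unit n k Hk Hn).
    rewrite concat_l by lra. f_equal. field. }
  assert (Rr : forall j, concat g1 g2 (grid (n + n) (n + j)) = g2 (grid n j)).
  { intros j. rewrite grid_double, grid_shift by auto. pose proof (grid_nonneg n j).
    rewrite concat_r by (auto; lra). f_equal. field. }
  assert (Gc : fine_subdivision Om (concat g1 g2) (n + n)).
  { intros k Hk. destruct (Nat.lt_ge_cases k n) as [Hkn | Hkn].
    - destruct (G1 k Hkn) as [c [r [Hc Hr]]]. exists c, r. split; [exact Hc |]. intros t Ht.
      rewrite !grid_double in Ht by auto. pose proof (grid_unit n (S k) Hkn Hn).
      rewrite concat_l by lra. apply Hr. lra.
    - destruct (G2 (k - n)%nat ltac:(lia)) as [c [r [Hc Hr]]].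
      exists c, r. split; [exact Hc |]. intros t Ht.
      replace k with (n + (k - n))%nat in Ht by lia.
      replace (S (n + (k - n))) with (n + S (k - n))%nat in Ht by lia.
      rewrite !grid_double, !grid_shift in Ht by auto. pose proof (grid_nonneg n (k - n)).
      rewrite concat_r by (auto; lra). apply Hr. lra. }
  rewrite (path_int_eq _ (n + n) ltac:(lia) Gc), (path_int_eq g1 n Hn G1),
    (path_int_eq g2 n Hn G2).
  unfold corner_sum. rewrite psum_add. f_equal.
  - apply psum_ext. intros k Hk. rewrite !L by lia. reflexivity.
  - apply psum_ext. intros k Hk. replace (S (n + k)) with (n + S k)%nat by lia.
    rewrite !Rr. reflexivity.
Qed.

Lemma path_int_reverse g : path_in Om g -> path_int (reverse g) = - path_int g.
Proof.
  intros P. destruct (path_fine_subdivision Om Hop g P) as [n [Hn G]].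
  assert (Erev : forall k, (k <= n)%nat -> 1 - grid n k = grid n (n - k))
    by (intros; rewrite grid_rev by lia; ring).
  assert (Gr : fine_subdivision Om (reverse g) n).
  { intros k Hk. destruct (G (n - S k)%nat ltac:(lia)) as [c [r [Hc Hr]]].
    exists c, r. split; [exact Hc |].
    intros t Ht. unfold reverse. apply Hr. replace (S (n - S k)) with (n - k)%nat by lia.
    rewrite !grid_rev by lia. lra. }
  rewrite (path_int_eq _ n Hn Gr), (path_int_eq g n Hn G).
  unfold corner_sum.
  rewrite (psum_rev (fun k => corner_int a b (g (grid n k)) (g (grid n (S k))))), <- psum_opp.
  apply psum_ext. intros k Hk. unfold reverse.
  destruct (G (n - S k)%nat ltac:(lia)) as [c [r [Hc Hr]]].
  rewrite !Erev by lia. replace (S (n - S k)) with (n - k)%nat in Hr |- * by lia.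
  pose proof (grid_le_S n (n - S k) Hn) as Hle.
  replace (S (n - S k)) with (n - k)%nat in Hle by lia.
  apply (corner_int_anti c r); [exact Hc | apply Hr; lra | apply Hr; lra].
Qed.

Lemma path_int_homotopic g1 g2 : path_in Om g1 -> path_in Om g2 ->
  g1 0 = g2 0 -> g1 1 = g2 1 ->
  (forall g, path_in Om g -> g 0 = g 1 -> null_homotopic Om g) ->
  path_int g1 = path_int g2.
Proof.
  intros P1 P2 E0 E1 SC.
  assert (Er : g1 1 = reverse g2 0) by (unfold reverse; rewrite Rminus_0_r; auto).
  pose proof (path_in_concat Om g1 (reverse g2) P1 (path_in_reverse Om g2 P2) Er) as PL.
  assert (L0 : concat g1 (reverse g2) 0 = concat g1 (reverse g2) 1).
  { rewrite concat_l, concat_r by (auto; lra). unfold reverse.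
    replace (2 * 0) with 0 by ring. replace (1 - (2 * 1 - 1)) with 0 by ring. auto. }
  pose proof (path_int_null_loop _ PL L0 (SC _ PL L0)) as Z.
  rewrite path_int_concat, path_int_reverse in Z; auto using path_in_reverse. lra.
Qed.

Section Primitive.
Variable p0 : R * R.
Hypothesis Hp0 : in_set Om p0.
Hypothesis Hconn : forall p q, in_set Om p -> in_set Om q ->
  exists g, path_in Om g /\ g 0 = p /\ g 1 = q.
Hypothesis Hsc : forall g, path_in Om g -> g 0 = g 1 -> null_homotopic Om g.

Let path_from_p0 (p : R * R) : R -> R * R :=
  epsilon (inhabits (fun _ : R => p0)) (fun g => path_in Om g /\ g 0 = p0 /\ g 1 = p).

Lemma path_from_p0_spec p : in_set Om p ->
  path_in Om (path_from_p0 p) /\ path_from_p0 p 0 = p0 /\ path_from_p0 p 1 = p.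
Proof. intros Hp. apply epsilon_spec, Hconn; auto. Qed.

Lemma path_int_from_p0_local p : in_set Om p -> exists r : posreal, square_in Om p r /\
  forall q, in_square p r q ->
    path_int (path_from_p0 q) = path_int (path_from_p0 p) + corner_int a b p q.
Proof.
  intros Hp. destruct (open_square_in Om Hop p Hp) as [r Hr]. exists r. split; [exact Hr |].
  intros q Hq. pose proof (in_square_center p r) as Hpp.
  destruct (path_from_p0_spec p Hp) as [P1 [E10 E11]].
  destruct (path_from_p0_spec q (proj2 Hr q Hq)) as [P2 [E20 E21]].
  pose proof (path_in_segment Om p r p q Hr Hpp Hq) as PS.
  assert (Es : path_from_p0 p 1 = segment p q 0)
    by (rewrite E11; unfold segment; destruct p; simpl; f_equal; ring).
  rewrite <- (path_int_segment p r p q Hr Hpp Hq), <- path_int_concat by auto.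
  apply path_int_homotopic; auto using path_in_concat.
  - rewrite concat_l by lra. replace (2 * 0) with 0 by ring. congruence.
  - rewrite concat_r by (auto; lra). replace (2 * 1 - 1) with 1 by ring. rewrite E21.
    unfold segment. destruct p, q; simpl; f_equal; ring.
Qed.

Lemma exists_primitive : exists G : R -> R -> R, forall u v, Om u v ->
  is_derive (fun x => G x v) u (a u v) /\ is_derive (fun y => G u y) v (b u v).
Proof.
  exists (fun u v => path_int (path_from_p0 (u, v))). intros u v Huv.
  destruct (path_int_from_p0_local (u, v) Huv) as [r [Hr Hloc]].
  pose proof (in_square_center (u, v) r) as Hc. split.
  - apply (is_derive_ext_loc (fun x => path_int (path_from_p0 (u, v)) + corner_int a b (u, v) (x, v))).
    + apply (filter_imp (fun x => in_square (u, v) r (x, v))); [| exact (in_square_locally_u _ r _ Hc)].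
      intros x Hx. symmetry. apply Hloc, Hx.
    + apply is_derive_const_plus. exact (corner_int_derive_u _ r (u, v) (u, v) Hr Hc Hc).
  - apply (is_derive_ext_loc (fun y => path_int (path_from_p0 (u, v)) + corner_int a b (u, v) (u, y))).
    + apply (filter_imp (fun y => in_square (u, v) r (u, y))); [| exact (in_square_locally_v _ r _ Hc)].
      intros y Hy. symmetry. apply Hloc, Hy.
    + apply is_derive_const_plus. exact (corner_int_derive_v _ r (u, v) (u, v) Hr Hc Hc).
Qed.

End Primitive.

End ClosedForm.

Lemma closed_form_exact (Om : R -> R -> Prop) (a b : R -> R -> R) :
  simply_connected_domain Om -> C1_on Om a -> C1_on Om b ->
  (forall u v, Om u v -> pv a u v = pu b u v) ->
  exists G : R -> R -> R, forall u v, Om u v ->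
    is_derive (fun x => G x v) u (a u v) /\ is_derive (fun y => G u y) v (b u v).
Proof.
  intros [[[u0 [v0 H0]] [Hop Hconn]] Hsc] Ha Hb Hclosed.
  exact (exists_primitive Om a b Ha Hb Hclosed Hop (u0, v0) H0 Hconn Hsc).
Qed.

(** * C^1 and C^2 functions on an open set *)

Lemma pu_const (k : R) u v : pu (fun _ _ => k) u v = 0.
Proof. unfold pu, pv. apply Derive_const. Qed.
Lemma pv_const (k : R) u v : pv (fun _ _ => k) u v = 0.
Proof. unfold pu, pv. apply Derive_const. Qed.

Lemma pu_plus (f g : R -> R -> R) u v : ex_derive (fun x => f x v) u -> ex_derive (fun x => g x v) u ->
  pu (fun x y => f x y + g x y) u v = pu f u v + pu g u v.
Proof. intros. apply (Derive_plus (fun x => f x v) (fun x => g x v)); auto. Qed.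
Lemma pv_plus (f g : R -> R -> R) u v : ex_derive (fun y => f u y) v -> ex_derive (fun y => g u y) v ->
  pv (fun x y => f x y + g x y) u v = pv f u v + pv g u v.
Proof. intros. apply (Derive_plus (fun y => f u y) (fun y => g u y)); auto. Qed.
Lemma pu_mult (f g : R -> R -> R) u v : ex_derive (fun x => f x v) u -> ex_derive (fun x => g x v) u ->
  pu (fun x y => f x y * g x y) u v = pu f u v * g u v + f u v * pu g u v.
Proof. intros. apply (Derive_mult (fun x => f x v) (fun x => g x v)); auto. Qed.
Lemma pv_mult (f g : R -> R -> R) u v : ex_derive (fun y => f u y) v -> ex_derive (fun y => g u y) v ->
  pv (fun x y => f x y * g x y) u v = pv f u v * g u v + f u v * pv g u v.
Proof. intros. apply (Derive_mult (fun y => f u y) (fun y => g u y)); auto. Qed.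

Lemma Rabs_between_le u x t : Rmin u x <= t <= Rmax u x -> Rabs (t - u) <= Rabs (x - u).
Proof.
  intros [H1 H2]. unfold Rmin, Rmax in *. destruct (Rle_dec u x).
  - rewrite !Rabs_right by lra. lra.
  - rewrite !Rabs_left1 by lra. lra.
Qed.

(* Mean value theorem in [x], with [A] locally bounded by its continuity. *)
Lemma continuity_2d_pt_of_partial (G A : R -> R -> R) u v :
  locally_2d (fun x y => is_derive (fun t => G t y) x (A x y)) u v ->
  continuity_2d_pt A u v -> continuous (fun y => G u y) v -> continuity_2d_pt G u v.
Proof.
  intros [d1 Hd1] HA Hc eps.
  destruct (HA (mkposreal 1 Rlt_0_1)) as [d2 Hd2]. simpl in Hd2.
  assert (He2 : 0 < eps / 2) by (pose proof (cond_pos eps); lra).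
  destruct (Hc (ball (G u v) (eps / 2)) (locally_ball _ (mkposreal _ He2))) as [d3 Hd3].
  set (K := Rabs (A u v) + 1).
  assert (HK : 0 < K) by (unfold K; pose proof (Rabs_pos (A u v)); lra).
  assert (Hd4 : 0 < eps / (2 * K)) by (apply Rdiv_lt_0_compat; [apply cond_pos | lra]).
  assert (Hd : 0 < Rmin (Rmin d1 d2) (Rmin d3 (eps / (2 * K))))
    by (repeat apply Rmin_glb_lt; try apply cond_pos; auto).
  exists (mkposreal _ Hd). simpl. intros x y Hx Hy.
  pose proof (Rmin_l (Rmin d1 d2) (Rmin d3 (eps / (2 * K)))).
  pose proof (Rmin_r (Rmin d1 d2) (Rmin d3 (eps / (2 * K)))).
  pose proof (Rmin_l d1 d2). pose proof (Rmin_r d1 d2).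
  pose proof (Rmin_l d3 (eps / (2 * K))). pose proof (Rmin_r d3 (eps / (2 * K))).
  destruct (MVT_gen (fun t => G t y) u x (fun t => A t y)) as [c [Hc1 Hc2]].
  - intros t Ht. apply (Hd1 t y); [pose proof (Rabs_between_le u x t ltac:(lra)) |]; lra.
  - intros t Ht. apply continuity_pt_filterlim.
    apply (ex_derive_continuous (K := R_AbsRing) (V := R_NormedModule) (fun s => G s y) t).
    exists (A t y). apply (Hd1 t y); [pose proof (Rabs_between_le u x t Ht) |]; lra.
  - pose proof (Rabs_between_le u x c Hc1).
    assert (HAc : Rabs (A c y) < K).
    { assert (Rabs (A c y - A u v) < 1) by (apply Hd2; lra).
      unfold K. pose proof (Rabs_triang_inv (A c y) (A u v)). lra. }
    assert (Hy3 : Rabs (G u y - G u v) < eps / 2) by (apply (Hd3 y); change (Rabs (y - v) < d3); lra).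
    replace (G x y - G u v) with ((G x y - G u y) + (G u y - G u v)) by ring.
    eapply Rle_lt_trans; [apply Rabs_triang |]. simpl in Hc2. rewrite Hc2, Rabs_mult.
    assert (Rabs (A c y) * Rabs (x - u) <= K * (eps / (2 * K)))
      by (apply Rmult_le_compat; try apply Rabs_pos; lra).
    replace (K * (eps / (2 * K))) with (eps / 2) in H6 by (field; lra). lra.
Qed.

Section Smoothness.
Variable Om : R -> R -> Prop.
Hypothesis Hop : open (in_set Om).

Lemma locally_2d_open u v : Om u v -> locally_2d (fun x y => Om x y) u v.
Proof.
  intros H. destruct (open_square_in Om Hop (u, v) H) as [r Hr]. exists r. intros x y Hx Hy.
  apply (proj2 Hr (x, y)). split; simpl; auto.
Qed.

Lemma locally_2d_eq_on (f g : R -> R -> R) : (forall u v, Om u v -> f u v = g u v) ->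
  forall u v, Om u v -> locally_2d (fun x y => f x y = g x y) u v.
Proof.
  intros E u v H. destruct (locally_2d_open u v H) as [d Hd]. exists d. intros; apply E, Hd; auto.
Qed.

Lemma pu_ext_on (f g : R -> R -> R) : (forall u v, Om u v -> f u v = g u v) ->
  forall u v, Om u v -> pu f u v = pu g u v.
Proof.
  intros E u v H. apply Derive_ext_loc, (locally_2d_1d_const_y (fun x y => f x y = g x y)).
  apply locally_2d_eq_on; auto.
Qed.

Lemma pv_ext_on (f g : R -> R -> R) : (forall u v, Om u v -> f u v = g u v) ->
  forall u v, Om u v -> pv f u v = pv g u v.
Proof.
  intros E u v H. apply Derive_ext_loc, (locally_2d_1d_const_x (fun x y => f x y = g x y)).
  apply locally_2d_eq_on; auto.
Qed.

Lemma C1_on_ext (f g : R -> R -> R) : (forall u v, Om u v -> f u v = g u v) ->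
  C1_on Om f -> C1_on Om g.
Proof.
  intros E Hf u v H. destruct (Hf u v H) as [H1 [H2 [H3 [H4 H5]]]].
  pose proof (locally_2d_eq_on f g E u v H) as Hloc.
  split; [| split; [| split; [| split]]].
  - apply (ex_derive_ext_loc (fun x => f x v)); auto.
    apply (locally_2d_1d_const_y (fun x y => f x y = g x y)), Hloc.
  - apply (ex_derive_ext_loc (fun y => f u y)); auto.
    apply (locally_2d_1d_const_x (fun x y => f x y = g x y)), Hloc.
  - apply (continuity_2d_pt_ext_loc f); auto.
  - apply (continuity_2d_pt_ext_loc (pu f)); auto.
    apply locally_2d_eq_on; auto. apply pu_ext_on; auto.
  - apply (continuity_2d_pt_ext_loc (pv f)); auto.
    apply locally_2d_eq_on; auto. apply pv_ext_on; auto.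
Qed.

Lemma C1_on_const (k : R) : C1_on Om (fun _ _ => k).
Proof.
  intros u v H. split; [| split; [| split; [| split]]];
    try apply ex_derive_const; try apply continuity_2d_pt_const.
  - apply (continuity_2d_pt_ext (fun _ _ => 0)); [intros; symmetry; apply pu_const |].
    apply continuity_2d_pt_const.
  - apply (continuity_2d_pt_ext (fun _ _ => 0)); [intros; symmetry; apply pv_const |].
    apply continuity_2d_pt_const.
Qed.

Lemma C1_on_plus (f g : R -> R -> R) : C1_on Om f -> C1_on Om g ->
  C1_on Om (fun x y => f x y + g x y).
Proof.
  intros Hf Hg u v H.
  destruct (Hf u v H) as [F1 [F2 [F3 [F4 F5]]]]. destruct (Hg u v H) as [G1 [G2 [G3 [G4 G5]]]].
  assert (E1 : forall x y, Om x y -> pu f x y + pu g x y = pu (fun x y => f x y + g x y) x y)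
    by (intros x y Hxy; symmetry; apply pu_plus; eapply C1_on_ex_derive_u; eauto).
  assert (E2 : forall x y, Om x y -> pv f x y + pv g x y = pv (fun x y => f x y + g x y) x y)
    by (intros x y Hxy; symmetry; apply pv_plus; eapply C1_on_ex_derive_v; eauto).
  split; [| split; [| split; [| split]]].
  - apply (ex_derive_plus (fun x => f x v) (fun x => g x v)); auto.
  - apply (ex_derive_plus (fun y => f u y) (fun y => g u y)); auto.
  - exact (continuity_2d_pt_plus _ _ _ _ F3 G3).
  - exact (continuity_2d_pt_ext_loc _ _ _ _ (locally_2d_eq_on _ _ E1 u v H)
             (continuity_2d_pt_plus _ _ _ _ F4 G4)).
  - exact (continuity_2d_pt_ext_loc _ _ _ _ (locally_2d_eq_on _ _ E2 u v H)
             (continuity_2d_pt_plus _ _ _ _ F5 G5)).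
Qed.

Lemma C1_on_mult (f g : R -> R -> R) : C1_on Om f -> C1_on Om g ->
  C1_on Om (fun x y => f x y * g x y).
Proof.
  intros Hf Hg u v H.
  destruct (Hf u v H) as [F1 [F2 [F3 [F4 F5]]]]. destruct (Hg u v H) as [G1 [G2 [G3 [G4 G5]]]].
  assert (E1 : forall x y, Om x y ->
             pu f x y * g x y + f x y * pu g x y = pu (fun x y => f x y * g x y) x y)
    by (intros x y Hxy; symmetry; apply pu_mult; eapply C1_on_ex_derive_u; eauto).
  assert (E2 : forall x y, Om x y ->
             pv f x y * g x y + f x y * pv g x y = pv (fun x y => f x y * g x y) x y)
    by (intros x y Hxy; symmetry; apply pv_mult; eapply C1_on_ex_derive_v; eauto).
  split; [| split; [| split; [| split]]].
  - exact (ex_derive_mult (fun x => f x v) (fun x => g x v) _ F1 G1).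
  - exact (ex_derive_mult (fun y => f u y) (fun y => g u y) _ F2 G2).
  - exact (continuity_2d_pt_mult _ _ _ _ F3 G3).
  - exact (continuity_2d_pt_ext_loc _ _ _ _ (locally_2d_eq_on _ _ E1 u v H)
      (continuity_2d_pt_plus _ _ _ _ (continuity_2d_pt_mult _ _ _ _ F4 G3)
                                     (continuity_2d_pt_mult _ _ _ _ F3 G4))).
  - exact (continuity_2d_pt_ext_loc _ _ _ _ (locally_2d_eq_on _ _ E2 u v H)
      (continuity_2d_pt_plus _ _ _ _ (continuity_2d_pt_mult _ _ _ _ F5 G3)
                                     (continuity_2d_pt_mult _ _ _ _ F3 G5))).
Qed.

Lemma C2_on_ext (f g : R -> R -> R) : (forall u v, Om u v -> f u v = g u v) ->
  C2_on Om f -> C2_on Om g.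
Proof.
  intros E [H1 [H2 H3]]. split; [| split].
  - apply (C1_on_ext f); auto.
  - apply (C1_on_ext (pu f)); auto. apply pu_ext_on; auto.
  - apply (C1_on_ext (pv f)); auto. apply pv_ext_on; auto.
Qed.

Lemma C2_on_const (k : R) : C2_on Om (fun _ _ => k).
Proof.
  split; [apply C1_on_const | split];
    apply (C1_on_ext (fun _ _ => 0)); try apply C1_on_const; intros; symmetry;
    [apply pu_const | apply pv_const].
Qed.

Lemma C2_on_plus (f g : R -> R -> R) : C2_on Om f -> C2_on Om g ->
  C2_on Om (fun x y => f x y + g x y).
Proof.
  intros [F1 [F2 F3]] [G1 [G2 G3]]. split; [apply C1_on_plus; assumption | split].
  - apply (C1_on_ext (fun x y => pu f x y + pu g x y)); [| apply C1_on_plus; assumption].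
    intros x y H. symmetry. apply pu_plus; eapply C1_on_ex_derive_u; eauto.
  - apply (C1_on_ext (fun x y => pv f x y + pv g x y)); [| apply C1_on_plus; assumption].
    intros x y H. symmetry. apply pv_plus; eapply C1_on_ex_derive_v; eauto.
Qed.

Lemma C2_on_mult (f g : R -> R -> R) : C2_on Om f -> C2_on Om g ->
  C2_on Om (fun x y => f x y * g x y).
Proof.
  intros [F1 [F2 F3]] [G1 [G2 G3]]. split; [apply C1_on_mult; assumption | split].
  - apply (C1_on_ext (fun x y => pu f x y * g x y + f x y * pu g x y));
      [| apply C1_on_plus; apply C1_on_mult; assumption].
    intros x y H. symmetry. apply pu_mult; eapply C1_on_ex_derive_u; eauto.
  - apply (C1_on_ext (fun x y => pv f x y * g x y + f x y * pv g x y));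
      [| apply C1_on_plus; apply C1_on_mult; assumption].
    intros x y H. symmetry. apply pv_mult; eapply C1_on_ex_derive_v; eauto.
Qed.

Lemma C2_on_primitive (G A B : R -> R -> R) : C1_on Om A -> C1_on Om B ->
  (forall u v, Om u v ->
     is_derive (fun x => G x v) u (A u v) /\ is_derive (fun y => G u y) v (B u v)) ->
  C2_on Om G.
Proof.
  intros HA HB HG.
  assert (EA : forall u v, Om u v -> A u v = pu G u v)
    by (intros u v H; symmetry; apply is_derive_unique, HG, H).
  assert (EB : forall u v, Om u v -> B u v = pv G u v)
    by (intros u v H; symmetry; apply is_derive_unique, HG, H).
  split; [| split; [apply (C1_on_ext A) | apply (C1_on_ext B)]; auto].
  intros u v H. split; [| split; [| split; [| split]]].
  - exists (A u v). apply HG, H.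
  - exists (B u v). apply HG, H.
  - apply (continuity_2d_pt_of_partial G A).
    + destruct (locally_2d_open u v H) as [d Hd]. exists d. intros x y Hx Hy. apply HG, Hd; auto.
    + exact (C1_on_continuity Om A u v HA H).
    + apply (ex_derive_continuous (K := R_AbsRing) (V := R_NormedModule)).
      exists (B u v). apply HG, H.
  - apply (continuity_2d_pt_ext_loc A); [apply locally_2d_eq_on; auto |].
    exact (C1_on_continuity Om A u v HA H).
  - apply (continuity_2d_pt_ext_loc B); [apply locally_2d_eq_on; auto |].
    exact (C1_on_continuity Om B u v HB H).
Qed.

Lemma Schwarz_C2_on f u v : C2_on Om f -> Om u v -> pu (pv f) u v = pv (pu f) u v.
Proof.
  intros [H1 [H2 H3]] H. apply (Schwarz f u v).
  - destruct (locally_2d_open u v H) as [d Hd]. exists d. intros x y Hx Hy.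
    pose proof (Hd x y Hx Hy) as Hxy.
    split; [exact (C1_on_ex_derive_u Om f x y H1 Hxy) |].
    split; [exact (C1_on_ex_derive_v Om f x y H1 Hxy) |].
    split; [exact (C1_on_ex_derive_u Om _ x y H3 Hxy) | exact (C1_on_ex_derive_v Om _ x y H2 Hxy)].
  - exact (C1_on_continuity_pu Om _ u v H3 H).
  - exact (C1_on_continuity_pv Om _ u v H2 H).
Qed.

End Smoothness.

(** * Wirtinger derivatives *)

Lemma dz_cplx f u v : dz (cplx f) u v = (/2 * pu f u v, - (/2 * pv f u v)).
Proof.
  unfold dz, Cpu, Cpv. change (ReF (cplx f)) with f. change (ImF (cplx f)) with (fun _ _ : R => 0).
  rewrite pu_const, pv_const. unfold RtoC, Ci, Cmult, Cminus, Cplus, Copp; simpl. f_equal; ring.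
Qed.

Lemma dzb_components g u v : dzb g u v =
  (/2 * (pu (ReF g) u v - pv (ImF g) u v), /2 * (pu (ImF g) u v + pv (ReF g) u v)).
Proof. unfold dzb, Cpu, Cpv, RtoC, Ci, Cmult, Cplus; simpl. f_equal; ring. Qed.

Lemma dzb_eq_0_Cauchy_Riemann g u v : dzb g u v = RtoC 0 ->
  pu (ReF g) u v = pv (ImF g) u v /\ pu (ImF g) u v = - pv (ReF g) u v.
Proof.
  rewrite dzb_components. intros E. apply pair_equal_spec in E. simpl in E. lra.
Qed.

Lemma dzb_dz_cplx f u v : dzb (dz (cplx f)) u v =
  (/4 * (pu (pu f) u v + pv (pv f) u v), /4 * (pv (pu f) u v - pu (pv f) u v)).
Proof.
  rewrite dzb_components.
  assert (Re_dz : ReF (dz (cplx f)) = fun x y => /2 * pu f x y)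
    by (unfold ReF; do 2 (apply functional_extensionality; intro); rewrite dz_cplx; reflexivity).
  assert (Im_dz : ImF (dz (cplx f)) = fun x y => - (/2 * pv f x y))
    by (unfold ImF; do 2 (apply functional_extensionality; intro); rewrite dz_cplx; reflexivity).
  rewrite Re_dz, Im_dz.
  assert (E1 : pu (fun x y => /2 * pu f x y) u v = /2 * pu (pu f) u v) by apply Derive_scal.
  assert (E2 : pv (fun x y => /2 * pu f x y) u v = /2 * pv (pu f) u v) by apply Derive_scal.
  assert (E3 : pu (fun x y => - (/2 * pv f x y)) u v = - (/2 * pu (pv f) u v))
    by (unfold pu; rewrite Derive_opp, Derive_scal; reflexivity).
  assert (E4 : pv (fun x y => - (/2 * pv f x y)) u v = - (/2 * pv (pv f) u v))
    by (unfold pv; rewrite Derive_opp, Derive_scal; reflexivity).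
  rewrite E1, E2, E3, E4. f_equal; field.
Qed.

Lemma laplacian_of_dzb_dz (f g : R -> R -> R) (k : R) u v :
  dzb (dz (cplx f)) u v = (RtoC k * dzb (dz (cplx g)) u v)%C ->
  pu (pu f) u v + pv (pv f) u v = k * (pu (pu g) u v + pv (pv g) u v).
Proof.
  rewrite !dzb_dz_cplx. unfold RtoC, Cmult. intros E. apply pair_equal_spec in E.
  simpl in E. lra.
Qed.

Lemma dzb_scal (c : C) g u v :
  ex_derive (fun x => ReF g x v) u -> ex_derive (fun x => ImF g x v) u ->
  ex_derive (fun y => ReF g u y) v -> ex_derive (fun y => ImF g u y) v ->
  dzb (fun x y => c * g x y)%C u v = (c * dzb g u v)%C.
Proof.
  intros Hu1 Hu2 Hv1 Hv2. rewrite !dzb_components. destruct c as [c1 c2].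
  unfold ReF, ImF, Cmult in *; simpl in *. unfold pu, pv.
  rewrite !Derive_minus, !Derive_plus, !Derive_scal by (apply ex_derive_scal; assumption).
  f_equal; ring.
Qed.

Lemma CC2_on_scal Om (c : C) g : open (in_set Om) -> CC2_on Om g ->
  CC2_on Om (fun x y => c * g x y)%C.
Proof.
  intros Hop [H1 H2]. destruct c as [c1 c2].
  assert (Hk : forall k, C2_on Om (fun _ _ => k)) by (intro; apply C2_on_const, Hop).
  split.
  - apply (C2_on_ext Om Hop (fun x y => c1 * ReF g x y + (- c2) * ImF g x y)).
    + intros u v _. unfold ReF, ImF, Cmult; simpl. ring.
    + apply C2_on_plus; auto; apply C2_on_mult; auto.
  - apply (C2_on_ext Om Hop (fun x y => c1 * ImF g x y + c2 * ReF g x y)).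
    + intros u v _. unfold ImF, ReF, Cmult; simpl. ring.
    + apply C2_on_plus; auto; apply C2_on_mult; auto.
Qed.

Lemma cis_neq_0 t : cis t <> RtoC 0.
Proof.
  intros E. apply pair_equal_spec in E. destruct E as [Ec Es].
  pose proof (sin2_cos2 t) as H. unfold Rsqr in H. rewrite Ec, Es in H. lra.
Qed.

(* With [e^{it} - e^{-it} = 2 i sin t], this is [(i sin t) z + Re (e^{-it} z) = e^{it} Re z]. *)
Lemma rotation_defect t (z a b : C) :
  ((cis t * a - (cis t - cis (- t)) / RtoC 2 * z * b) - RtoC (fst (cis (- t) * z)) * b
   = cis t * (a - RtoC (fst z) * b))%C.
Proof.
  destruct z as [x y], a as [a1 a2], b as [b1 b2]. unfold cis. rewrite cos_neg, sin_neg.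
  unfold Cminus, Cdiv, Cmult, Cinv, Cplus, Copp, RtoC; simpl. f_equal; field.
Qed.

(** * The rotated Weierstrass data *)

Ltac C1_on_closure Om Hop :=
  repeat lazymatch goal with
  | |- C1_on Om (fun x y => @?F x y + @?G x y) => apply (C1_on_plus Om Hop F G)
  | |- C1_on Om (fun x y => @?F x y * @?G x y) => apply (C1_on_mult Om Hop F G)
  | |- C1_on Om (fun _ _ => ?k) => apply (C1_on_const Om k)
  end.

Section Rotation.
Variables (Om : R -> R -> Prop) (h : R -> R -> C) (M N : R -> R -> R) (tau : R).
Hypothesis Hop : open (in_set Om).
Hypothesis HWD : WD2 Om h M N.

Definition Mtau_dz (u v : R) : C :=
  (cis tau * dz (cplx M) u v
   - (cis tau - cis (- tau)) / RtoC 2 * h u v * dz (cplx N) u v)%C.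

(* The partial derivatives in [u] and [v] prescribed by [(M_tau)_z = Mtau_dz]. *)
Definition Mtau_du (u v : R) : R :=
  cos tau * pu M u v + sin tau * pv M u v
  + sin tau * (ImF h u v * pu N u v) + (- sin tau) * (ReF h u v * pv N u v).
Definition Mtau_dv (u v : R) : R :=
  (- sin tau) * pu M u v + cos tau * pv M u v
  + sin tau * (ReF h u v * pu N u v) + sin tau * (ImF h u v * pv N u v).

Lemma Mtau_dz_components u v : Mtau_dz u v = (/2 * Mtau_du u v, - (/2 * Mtau_dv u v)).
Proof.
  unfold Mtau_dz, Mtau_du, Mtau_dv, ReF, ImF. rewrite !dz_cplx. unfold cis.
  rewrite cos_neg, sin_neg. destruct (h u v) as [x y].
  unfold Cminus, Cdiv, Cmult, Cinv, Cplus, Copp, RtoC; simpl. f_equal; field.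
Qed.

Lemma dz_cplx_eq_Mtau_dz (f : R -> R -> R) u v : dz (cplx f) u v = Mtau_dz u v ->
  pu f u v = Mtau_du u v /\ pv f u v = Mtau_dv u v.
Proof.
  rewrite dz_cplx, Mtau_dz_components. intros E. apply pair_equal_spec in E. lra.
Qed.

Let HM := proj1 (proj2 HWD).
Let HN := proj1 (proj2 (proj2 HWD)).
Let HReh := proj1 (proj1 (proj1 HWD)).
Let HImh := proj1 (proj2 (proj1 HWD)).

Lemma C1_on_Mtau_du : C1_on Om Mtau_du.
Proof.
  unfold Mtau_du. C1_on_closure Om Hop;
    first [apply HM | apply HN | apply HReh | apply HImh].
Qed.

Lemma C1_on_Mtau_dv : C1_on Om Mtau_dv.
Proof.
  unfold Mtau_dv. C1_on_closure Om Hop;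
    first [apply HM | apply HN | apply HReh | apply HImh].
Qed.

Section AtPoint.
Variables u v : R.
Hypothesis Huv : Om u v.

Ltac ex_derive_data :=
  repeat split;
  (lazymatch goal with
   | |- ex_derive (fun x => ?f x v) u => apply (C1_on_ex_derive_u Om f u v)
   | |- ex_derive (fun y => ?f u y) v => apply (C1_on_ex_derive_v Om f u v)
   end; [first [apply HM | apply HN | apply HReh | apply HImh] | exact Huv]).

Lemma pu_Mtau_du : pu Mtau_du u v =
  cos tau * pu (pu M) u v + sin tau * pu (pv M) u v
  + sin tau * (pu (ImF h) u v * pu N u v + ImF h u v * pu (pu N) u v)
  + (- sin tau) * (pu (ReF h) u v * pv N u v + ReF h u v * pu (pv N) u v).
Proof. apply is_derive_unique. unfold Mtau_du. auto_derive; [ex_derive_data | unfold pu; ring]. Qed.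

Lemma pv_Mtau_du : pv Mtau_du u v =
  cos tau * pv (pu M) u v + sin tau * pv (pv M) u v
  + sin tau * (pv (ImF h) u v * pu N u v + ImF h u v * pv (pu N) u v)
  + (- sin tau) * (pv (ReF h) u v * pv N u v + ReF h u v * pv (pv N) u v).
Proof. apply is_derive_unique. unfold Mtau_du. auto_derive; [ex_derive_data | unfold pv; ring]. Qed.

Lemma pu_Mtau_dv : pu Mtau_dv u v =
  (- sin tau) * pu (pu M) u v + cos tau * pu (pv M) u v
  + sin tau * (pu (ReF h) u v * pu N u v + ReF h u v * pu (pu N) u v)
  + sin tau * (pu (ImF h) u v * pv N u v + ImF h u v * pu (pv N) u v).
Proof. apply is_derive_unique. unfold Mtau_dv. auto_derive; [ex_derive_data | unfold pu; ring]. Qed.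

Lemma pv_Mtau_dv : pv Mtau_dv u v =
  (- sin tau) * pv (pu M) u v + cos tau * pv (pv M) u v
  + sin tau * (pv (ReF h) u v * pu N u v + ReF h u v * pv (pu N) u v)
  + sin tau * (pv (ImF h) u v * pv N u v + ImF h u v * pv (pv N) u v).
Proof. apply is_derive_unique. unfold Mtau_dv. auto_derive; [ex_derive_data | unfold pv; ring]. Qed.

Let CR := dzb_eq_0_Cauchy_Riemann h u v (proj1 (proj2 (proj2 (proj2 (proj2 HWD)) u v Huv))).
Let Lap := laplacian_of_dzb_dz M N (fst (h u v)) u v
             (proj1 (proj2 (proj2 (proj2 (proj2 (proj2 HWD)) u v Huv)))).
Let SM := Schwarz_C2_on Om Hop M u v HM Huv.
Let SN := Schwarz_C2_on Om Hop N u v HN Huv.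

Lemma M_vv_eq : pv (pv M) u v =
  ReF h u v * (pu (pu N) u v + pv (pv N) u v) - pu (pu M) u v.
Proof. unfold ReF. pose proof Lap. lra. Qed.

(* Closedness is [sin tau] times [M_zzbar - Re h N_zzbar]; the terms in the
   first derivatives of [h] cancel by Cauchy-Riemann. *)
Lemma Mtau_closed : pv Mtau_du u v = pu Mtau_dv u v.
Proof.
  rewrite pv_Mtau_du, pu_Mtau_dv, SM, SN, (proj1 CR), (proj2 CR), M_vv_eq. ring.
Qed.

Lemma Mtau_divergence : pu Mtau_du u v + pv Mtau_dv u v =
  (cos tau * ReF h u v + sin tau * ImF h u v) * (pu (pu N) u v + pv (pv N) u v).
Proof.
  rewrite pu_Mtau_du, pv_Mtau_dv, SM, SN, (proj1 CR), (proj2 CR), M_vv_eq. ring.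
Qed.

End AtPoint.

Lemma exists_Mtau : simply_connected_domain Om ->
  exists Mt, C2_on Om Mt /\ forall u v, Om u v -> dz (cplx Mt) u v = Mtau_dz u v.
Proof.
  intros SC.
  destruct (closed_form_exact Om Mtau_du Mtau_dv SC C1_on_Mtau_du C1_on_Mtau_dv Mtau_closed)
    as [G HG].
  exists G. split; [exact (C2_on_primitive Om Hop G _ _ C1_on_Mtau_du C1_on_Mtau_dv HG) |].
  intros u v Huv. destruct (HG u v Huv) as [Du Dv].
  rewrite dz_cplx, Mtau_dz_components.
  replace (pu G u v) with (Mtau_du u v) by (symmetry; apply is_derive_unique, Du).
  replace (pv G u v) with (Mtau_dv u v) by (symmetry; apply is_derive_unique, Dv).
  reflexivity.
Qed.

Lemma WD2_rotation (Mt : R -> R -> R) : C2_on Om Mt ->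
  (forall u v, Om u v -> dz (cplx Mt) u v = Mtau_dz u v) ->
  WD2 Om (fun u v => cis (- tau) * h u v)%C Mt N.
Proof.
  intros HMt Hdz.
  assert (Hdu : forall u v, Om u v -> pu Mt u v = Mtau_du u v)
    by (intros u v Huv; exact (proj1 (dz_cplx_eq_Mtau_dz Mt u v (Hdz u v Huv)))).
  assert (Hdv : forall u v, Om u v -> pv Mt u v = Mtau_dv u v)
    by (intros u v Huv; exact (proj2 (dz_cplx_eq_Mtau_dz Mt u v (Hdz u v Huv)))).
  split; [exact (CC2_on_scal Om _ h Hop (proj1 HWD)) |].
  split; [exact HMt |]. split; [exact HN |].
  intros u v Huv. destruct (proj2 (proj2 (proj2 HWD)) u v Huv) as [Hne [Hhol [_ Hnd]]].
  split; [| split; [| split]].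
  - apply Cmult_neq_0; [apply cis_neq_0 | exact Hne].
  - rewrite dzb_scal, Hhol.
    + unfold RtoC, Cmult; simpl. f_equal; ring.
    + apply (C1_on_ex_derive_u Om); [apply HReh | exact Huv].
    + apply (C1_on_ex_derive_u Om); [apply HImh | exact Huv].
    + apply (C1_on_ex_derive_v Om); [apply HReh | exact Huv].
    + apply (C1_on_ex_derive_v Om); [apply HImh | exact Huv].
  - rewrite !dzb_dz_cplx, (pu_ext_on Om Hop _ _ Hdu u v Huv), (pv_ext_on Om Hop _ _ Hdu u v Huv),
      (pu_ext_on Om Hop _ _ Hdv u v Huv), (pv_ext_on Om Hop _ _ Hdv u v Huv),
      <- (Mtau_closed u v Huv), (Schwarz_C2_on Om Hop N u v HN Huv).
    rewrite (Mtau_divergence u v Huv).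
    unfold cis, ReF, ImF. rewrite cos_neg, sin_neg. destruct (h u v) as [x y].
    unfold RtoC, Cmult; simpl. f_equal; ring.
  - rewrite (Hdz u v Huv). unfold Mtau_dz. rewrite rotation_defect.
    apply Cmult_neq_0; [apply cis_neq_0 | exact Hnd].
Qed.

End Rotation.

Theorem mainTheorem4 :
  forall (Om : R -> R -> Prop) (h : R -> R -> C) (M N : R -> R -> R) (tau : R),
    simply_connected_domain Om ->
    WD2 Om h M N ->
    let h_tau := fun u v => (cis (- tau) * h u v)%C in
    let N_tau := N in
    let rhs := fun u v =>
      (cis tau * dz (cplx M) u v
       - (cis tau - cis (- tau)) / RtoC 2 * h u v * dz (cplx N) u v)%C in
    (exists M_tau : R -> R -> R,
        C2_on Om M_tau /\ forall u v, Om u v -> dz (cplx M_tau) u v = rhs u v) /\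
    (forall M_tau : R -> R -> R,
        C2_on Om M_tau -> (forall u v, Om u v -> dz (cplx M_tau) u v = rhs u v) ->
        WD2 Om h_tau M_tau N_tau).
Proof.
  intros Om h M N tau SC HWD h_tau N_tau rhs.
  pose proof (proj1 (proj2 (proj1 SC))) as Hop.
  split.
  - exact (exists_Mtau Om h M N tau Hop HWD SC).
  - exact (WD2_rotation Om h M N tau Hop HWD).
Qed.
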